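(* Let $n\ge2$, $\omega\in\mathbb{R}^n$, $k\in\mathbb{R}_{>0}^n$ satisfy (IC1) $\sum_\mu\omega_\mu=0$, (IC2) $\omega\ne0$, (IC3) $\left|\frac{\omega_1}{k_1}\right|\le\cdots\le\left|\frac{\omega_n}{k_n}\right|$. For $\sigma\in\{-1,+1\}^n$ let $f_\sigma(R)=-R+\frac1n\sum_{\mu=1}^n\sigma_\mu\sqrt{k_\mu^2R-\omega_\mu^2}$. Let $\sigma\in\{-1,+1\}^n$ and indices $\mu,\nu$ with $\sigma_\mu=+1$, $\sigma_\nu=-1$, and let $\sigma'$ agree with $\sigma$ except that $\sigma'_\mu=-1$ and $\sigma'_\nu=+1$. Suppose $$(k_\mu^2-k_\nu^2)\left(\frac{\omega_n}{k_n}\right)^2\ge\omega_\mu^2-\omega_\nu^2\quad\text{and}\quad(k_\mu^2-k_\nu^2)\left(\frac1n\sum_{\iota=1}^nk_\iota\right)^2\ge\omega_\mu^2-\omega_\nu^2.$$ If $f_\sigma$ has no positive roots, then $f_{\sigma'}$ has no positive roots.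
   Context: Square roots are nonnegative real square roots; a positive root of $f_\sigma$ is a real $R>0$ with $k_\mu^2R-\omega_\mu^2\ge0$ for all $\mu$ and $f_\sigma(R)=0$. *)

From HB Require Import structures.
From mathcomp Require Import all_boot all_order all_algebra.
From mathcomp Require Import reals.
Set Implicit Arguments. Unset Strict Implicit. Unset Printing Implicit Defensive.
Import Order.TTheory GRing.Theory Num.Theory.
Local Open Scope ring_scope.

Definition f_sigma (R : realType) (n : nat) (omega k sigma : 'I_n -> R) (x : R) : R :=
  - x + n%:R^-1 * \sum_(i < n) sigma i * Num.sqrt (k i ^+ 2 * x - omega i ^+ 2).

Definition positive_root (R : realType) (n : nat) (omega k sigma : 'I_n -> R) (x : R) : Prop :=
  0 < x /\ (forall i : 'I_n, 0 <= k i ^+ 2 * x - omega i ^+ 2) /\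
  f_sigma omega k sigma x = 0.

Definition is_sign (R : realType) (n : nat) (sigma : 'I_n -> R) : Prop :=
  forall i, sigma i = 1 \/ sigma i = -1.

From HB Require Import structures.
From mathcomp Require Import all_boot all_order all_algebra.
From mathcomp Require Import reals topology normedtype realfun.
From mathcomp Require Import lra.
Set Implicit Arguments. Unset Strict Implicit. Unset Printing Implicit Defensive.
Import Order.TTheory GRing.Theory Num.Theory.
Import numFieldNormedType.Exports.
Local Open Scope ring_scope.

(* Let x be a positive root of f_sigma'.  Since f_sigma'(x) <= -x + K sqrt x, where K is
   the mean of the k_i, we get x <= K^2; the radicand at the last index gives
   x >= (omega_n / k_n)^2.  The two hypotheses bound the affine function
   R |-> (k_mu^2 - k_nu^2) R - (omega_mu^2 - omega_nu^2) from below at both ends of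
   this interval, hence at x, so the mu-radicand dominates the nu-radicand at x and
   f_sigma(x) = f_sigma'(x) + (2/n)(sqrt(mu-radicand) - sqrt(nu-radicand)) >= 0.
   As f_sigma < 0 beyond K^2, the intermediate value theorem yields a root of f_sigma
   in [x, oo), where all radicands remain nonnegative. *)

Lemma ler_mul_between (R : realDomainType) (a c l u x : R) :
  c <= a * l -> c <= a * u -> l <= x -> x <= u -> c <= a * x.
Proof.
move=> c_le_al c_le_au l_le_x x_le_u.
have [a_ge0 | a_lt0] := lerP 0 a.
  exact: le_trans c_le_al (ler_wpM2l a_ge0 l_le_x).
exact: le_trans c_le_au (ler_wnM2l (ltW a_lt0) x_le_u).
Qed.

Section SignedSqrtSum.
Variables (R : realType) (n : nat) (omega k : 'I_n -> R).

Lemma continuous_f_sigma (sigma : 'I_n -> R) : continuous (f_sigma omega k sigma).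
Proof.
move=> x; apply: continuousD; first exact: opp_continuous.
apply: (@continuousM _ _ (fun=> n%:R^-1)); first exact: cst_continuous.
apply: continuous_big; first exact: add_continuous.
move=> i _ y.
apply: (@continuousM _ _ (fun=> sigma i) (fun z => Num.sqrt (k i ^+ 2 * z - omega i ^+ 2))).
  exact: cst_continuous.
apply: continuous_comp; last exact: sqrt_continuous.
apply: continuousB; last exact: cst_continuous.
by apply: (@continuousM _ _ (fun=> k i ^+ 2)); [exact: cst_continuous|].
Qed.

Lemma f_sigma_swap (sigma sigma' : 'I_n -> R) (mu nu : 'I_n) (x : R) :
  mu != nu -> sigma mu = 1 -> sigma nu = -1 -> sigma' mu = -1 -> sigma' nu = 1 ->
  (forall i, i != mu -> i != nu -> sigma' i = sigma i) ->
  f_sigma omega k sigma x = f_sigma omega k sigma' x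
    + n%:R^-1 * (2 * (Num.sqrt (k mu ^+ 2 * x - omega mu ^+ 2)
                      - Num.sqrt (k nu ^+ 2 * x - omega nu ^+ 2))).
Proof.
move=> mu_neq_nu smu snu smu' snu' s_agree; rewrite /f_sigma addrAC -addrA -mulrDr.
congr (_ + _ * _); apply/eqP; rewrite -subr_eq -sumrB.
rewrite (bigD1 mu) //= (bigD1 nu) 1?eq_sym //= big1 => [|i /andP[i_nu i_mu]].
  by rewrite smu snu smu' snu'; apply/eqP; lra.
by rewrite s_agree // subrr.
Qed.

Hypothesis k_ge0 : forall i, 0 <= k i.

Definition kmean := n%:R^-1 * \sum_(i < n) k i.

Lemma kmean_ge0 : 0 <= kmean.
Proof. by rewrite mulr_ge0 ?invr_ge0 ?ler0n ?sumr_ge0. Qed.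

Lemma f_sigma_le (sigma : 'I_n -> R) (y : R) : is_sign sigma -> 0 <= y ->
  f_sigma omega k sigma y <= - y + kmean * Num.sqrt y.
Proof.
move=> sign_sigma y_ge0; rewrite lerD2l -mulrA ler_wpM2l ?invr_ge0 ?ler0n //.
rewrite mulr_suml; apply: ler_sum => i _.
have sqrt_le : Num.sqrt (k i ^+ 2 * y - omega i ^+ 2) <= k i * Num.sqrt y.
  have -> : k i * Num.sqrt y = Num.sqrt (k i ^+ 2 * y).
    by rewrite sqrtrM ?sqr_ge0 // sqrtr_sqr ger0_norm.
  by rewrite ler_wsqrtr // lerBlDr lerDl sqr_ge0.
have := sqrtr_ge0 (k i ^+ 2 * y - omega i ^+ 2).
by case: (sign_sigma i) => ->; lra.
Qed.

Lemma f_sigma_lt0 (sigma : 'I_n -> R) (y : R) : is_sign sigma ->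
  kmean ^+ 2 < y -> f_sigma omega k sigma y < 0.
Proof.
move=> sign_sigma y_gt; have y_gt0 : 0 < y := le_lt_trans (sqr_ge0 kmean) y_gt.
apply: le_lt_trans (f_sigma_le sign_sigma (ltW y_gt0)) _.
have kmean_lt : kmean < Num.sqrt y.
  by rewrite -(ger0_norm kmean_ge0) -sqrtr_sqr ltr_sqrt.
have := sqr_sqrtr (ltW y_gt0); have := sqrtr_ge0 y; have := kmean_ge0; nra.
Qed.

Lemma positive_root_le_kmean (sigma : 'I_n -> R) (x : R) : is_sign sigma ->
  positive_root omega k sigma x -> x <= kmean ^+ 2.
Proof.
move=> sign_sigma [_ [_ fx0]]; rewrite leNgt; apply/negP => /(f_sigma_lt0 sign_sigma).
by rewrite fx0 ltxx.
Qed.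

Lemma positive_root_from_nonneg (sigma : 'I_n -> R) (x : R) : is_sign sigma -> 0 < x ->
  (forall i, 0 <= k i ^+ 2 * x - omega i ^+ 2) -> 0 <= f_sigma omega k sigma x ->
  exists2 c, x <= c & positive_root omega k sigma c.
Proof.
move=> sign_sigma x_gt0 rad_ge0 fx_ge0.
pose X := x + kmean ^+ 2 + 1.
have x_le_X : x <= X by rewrite /X; have := sqr_ge0 kmean; lra.
have fX_lt0 : f_sigma omega k sigma X < 0.
  by apply: f_sigma_lt0 => //; rewrite /X; lra.
have sign_change : Num.min (f_sigma omega k sigma x) (f_sigma omega k sigma X) <= 0
    <= Num.max (f_sigma omega k sigma x) (f_sigma omega k sigma X).
  by rewrite ge_min le_max fx_ge0 (ltW fX_lt0) orbT.
have [c] := IVT x_le_X (continuous_subspaceT (@continuous_f_sigma sigma)) sign_change.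
rewrite in_itv /= => /andP[x_le_c _] fc0; exists c => //.
split; first exact: lt_le_trans x_le_c.
split=> // i; apply: le_trans (rad_ge0 i) _.
by rewrite lerD2r ler_wpM2l ?sqr_ge0.
Qed.

End SignedSqrtSum.

Theorem lemma3 (R : realType) (m : nat) (omega k : 'I_m.+2 -> R)
  (hk : forall i, 0 < k i)
  (IC1 : \sum_(i < m.+2) omega i = 0)
  (IC2 : exists i, omega i != 0)
  (IC3 : forall i j : 'I_m.+2, (i <= j)%N -> `|omega i / k i| <= `|omega j / k j|)
  (sigma sigma' : 'I_m.+2 -> R) (mu nu : 'I_m.+2)
  (hsig : is_sign sigma)
  (hmu : sigma mu = 1) (hnu : sigma nu = -1)
  (hmu' : sigma' mu = -1) (hnu' : sigma' nu = 1)
  (hagree : forall i, i != mu -> i != nu -> sigma' i = sigma i)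
  (H1 : (k mu ^+ 2 - k nu ^+ 2) * (omega ord_max / k ord_max) ^+ 2
          >= omega mu ^+ 2 - omega nu ^+ 2)
  (H2 : (k mu ^+ 2 - k nu ^+ 2) * ((m.+2)%:R^-1 * \sum_(i < m.+2) k i) ^+ 2
          >= omega mu ^+ 2 - omega nu ^+ 2) :
  (forall x : R, ~ positive_root omega k sigma x) ->
  (forall x : R, ~ positive_root omega k sigma' x).
Proof.
move=> no_root x root'; have [x_gt0 [rad_ge0 f'x0]] := root'.
have k_ge0 i : 0 <= k i := ltW (hk i).
have mu_neq_nu : mu != nu by apply: contra_eq_neq hnu => <-; rewrite hmu; lra.
have sign' : is_sign sigma'.
  move=> i; have [->|i_mu] := eqVneq i mu; first by right.
  have [->|i_nu] := eqVneq i nu; first by left.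
  by rewrite hagree.
have x_le : x <= kmean k ^+ 2 := positive_root_le_kmean k_ge0 sign' root'.
have x_ge : (omega ord_max / k ord_max) ^+ 2 <= x.
  by rewrite expr_div_n ler_pdivrMr ?exprn_gt0 // -subr_ge0 mulrC.
have rad_le : k nu ^+ 2 * x - omega nu ^+ 2 <= k mu ^+ 2 * x - omega mu ^+ 2.
  by have := ler_mul_between H1 H2 x_ge x_le; lra.
have fx_ge0 : 0 <= f_sigma omega k sigma x.
  rewrite (f_sigma_swap omega k x mu_neq_nu hmu hnu hmu' hnu' hagree) f'x0 add0r.
  by rewrite mulr_ge0 ?invr_ge0 ?ler0n // mulr_ge0 // subr_ge0 ler_wsqrtr.
have [c _ root] := positive_root_from_nonneg k_ge0 hsig x_gt0 rad_ge0 fx_ge0.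
exact: no_root root.
Qed.
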